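(* In $\mathbf{Sol}$ there exist geodesic triangles whose interior angle sum is larger than $\pi$, geodesic triangles whose interior angle sum is less than $\pi$, and geodesic triangles whose interior angle sum equals $\pi$.
   Context: $\mathbf{Sol}$ is $\mathbb{R}^3$ with coordinates $(x,y,z)$, with group law $(a,b,c)(x,y,z)=(x+ae^{-z},\,y+be^{z},\,z+c)$ and left-invariant Riemannian metric $ds^2=e^{2z}dx^2+e^{-2z}dy^2+dz^2$. A geodesic triangle consists of three points not on a common geodesic (vertices) and geodesic segments (sides) joining them pairwise; the interior angle at a vertex is the angle, measured with the Riemannian metric at that vertex, between the initial tangent vectors of the two sides issuing from that vertex. *)

From Stdlib Require Import Reals Lra.
From Coquelicot Require Import Coquelicot.
Open Scope R_scope.

Record pt := Pt { px : R; py : R; pz : R }.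

Record curve := Curve { cx : R -> R; cy : R -> R; cz : R -> R }.

Definition cpt (c : curve) (t : R) : pt := Pt (cx c t) (cy c t) (cz c t).

Definition sol_metric (p u v : pt) : R :=
  exp (2 * pz p) * px u * px v + exp (- (2 * pz p)) * py u * py v + pz u * pz v.

(* Geodesics of Sol: smooth (C^2) curves defined on all of R (Sol is complete)
   satisfying the geodesic equation  c'' + Gamma(c', c') = 0, where the
   Christoffel symbols of the metric above give
     x'' + 2 x' z' = 0,  y'' - 2 y' z' = 0,  z'' - e^{2z} x'^2 + e^{-2z} y'^2 = 0. *)
Definition is_geodesic (c : curve) : Prop :=
  (forall t, ex_derive (cx c) t /\ ex_derive (cy c) t /\ ex_derive (cz c) t) /\
  (forall t, ex_derive (Derive (cx c)) t /\ ex_derive (Derive (cy c)) t /\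
             ex_derive (Derive (cz c)) t) /\
  (forall t,
     Derive (Derive (cx c)) t + 2 * Derive (cx c) t * Derive (cz c) t = 0 /\
     Derive (Derive (cy c)) t - 2 * Derive (cy c) t * Derive (cz c) t = 0 /\
     Derive (Derive (cz c)) t - exp (2 * cz c t) * (Derive (cx c) t) ^ 2
       + exp (- (2 * cz c t)) * (Derive (cy c) t) ^ 2 = 0).

Definition velocity (c : curve) (t : R) : pt :=
  Pt (Derive (cx c) t) (Derive (cy c) t) (Derive (cz c) t).

Definition opp_vec (u : pt) : pt := Pt (- px u) (- py u) (- pz u).

Definition sol_angle (p u v : pt) : R :=
  acos (sol_metric p u v / sqrt (sol_metric p u u * sol_metric p v v)).

Definition on_common_geodesic (A B C : pt) : Prop :=
  exists c : curve, is_geodesic c /\ (exists t, velocity c t <> Pt 0 0 0) /\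
    exists a b d : R, cpt c a = A /\ cpt c b = B /\ cpt c d = C.

Definition geod_segment (c : curve) (P Q : pt) : Prop :=
  is_geodesic c /\ cpt c 0 = P /\ cpt c 1 = Q.

Definition geod_triangle (A B C : pt) (cAB cBC cCA : curve) : Prop :=
  ~ on_common_geodesic A B C /\
  geod_segment cAB A B /\ geod_segment cBC B C /\ geod_segment cCA C A.

(* Sum of the interior angles: at each vertex, the angle between the initial
   tangent vectors of the two sides issuing from it (a side traversed
   backwards has initial tangent minus the final velocity). *)
Definition angle_sum (A B C : pt) (cAB cBC cCA : curve) : R :=
  sol_angle A (velocity cAB 0) (opp_vec (velocity cCA 1)) +
  sol_angle B (velocity cBC 0) (opp_vec (velocity cAB 1)) +
  sol_angle C (velocity cCA 0) (opp_vec (velocity cBC 1)).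

(* Take A = (0,0,0), B = (2,2,0) and C = (0,2,s).  The side AB is a straight line in the plane
   z = 0, while CA and BC lie in the planes x = 0 and y = 2; these are hyperbolic planes, in which
   geodesics are semicircles, so all three sides and the three angles are explicit.  The angle sum
   is a continuous function of e = exp (2 s) which equals 4 PI / 3 at e = 1 and is below PI for
   large e, so the intermediate value theorem produces a triangle with angle sum exactly PI.  The
   vertices are never on one geodesic: x' e^(2z) is constant along a geodesic, so x is either
   constant or injective on it, whereas A and C share their x-coordinate and B does not. *)

From Stdlib Require Import Reals Lra Ranalysis5.
From Coquelicot Require Import Coquelicot.
Open Scope R_scope.

(** * Real analysis *)

Lemma exp_2x x : exp (2 * x) = exp x * exp x.
Proof. rewrite <- exp_plus. f_equal. ring. Qed.

Lemma mean_value (f df : R -> R) :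
  (forall t, is_derive f t (df t)) -> forall a b, exists c, f b - f a = df c * (b - a).
Proof.
  intros H a b.
  destruct (MVT_cor4 f df a (Rabs (b - a)) (fun c _ => H c) b (Rle_refl _)) as [c [Hc _]].
  now exists c.
Qed.

Lemma acos_decreasing x y : -1 <= x -> x < y -> y <= 1 -> acos y < acos x.
Proof.
  intros Hx Hxy Hy. destruct (acos_bound x) as [Hx0 HxP]. destruct (acos_bound y) as [Hy0 HyP].
  destruct (Rlt_le_dec (acos y) (acos x)) as [L | L]; [assumption | exfalso].
  destruct (Rle_lt_or_eq_dec _ _ L) as [L' | L'].
  - pose proof (cos_decreasing_1 _ _ Hx0 HxP Hy0 HyP L') as Hcos.
    rewrite !cos_acos in Hcos by lra. lra.
  - apply (f_equal cos) in L'. rewrite !cos_acos in L' by lra. lra.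
Qed.

Lemma acos_half : acos (1 / 2) = PI / 3.
Proof. rewrite <- cos_PI3. apply acos_cos. pose proof PI_RGT_0. split; lra. Qed.

Lemma acos_sqrt3_half : acos (sqrt 3 / 2) = PI / 6.
Proof. rewrite <- cos_PI6. apply acos_cos. pose proof PI_RGT_0. split; lra. Qed.

Lemma div_sqrt_bound M X : M * M < X -> -1 < M / sqrt X < 1.
Proof.
  intros HM. assert (HX : 0 < X) by nra.
  assert (Hs : 0 < sqrt X) by (apply sqrt_lt_R0; assumption).
  assert (Hss : sqrt X * sqrt X = X) by (apply sqrt_sqrt; lra).
  assert (- sqrt X < M < sqrt X) by (split; nra).
  split; apply (Rmult_lt_reg_r (sqrt X)); try assumption; field_simplify; lra.
Qed.

Lemma lt_div_sqrt a M X : 0 <= a -> 0 < M -> 0 < X -> a * a * X < M * M -> a < M / sqrt X.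
Proof.
  intros Ha HM HX H.
  assert (Hs : 0 < sqrt X) by (apply sqrt_lt_R0; assumption).
  assert (Hss : sqrt X * sqrt X = X) by (apply sqrt_sqrt; lra).
  assert (a * sqrt X < M) by nra.
  apply (Rmult_lt_reg_r (sqrt X)); [assumption|]. field_simplify; lra.
Qed.

Lemma continuity_pt_acos_comp h x :
  ex_derive h x -> -1 < h x < 1 -> continuity_pt (fun y => acos (h y)) x.
Proof.
  intros D B. apply (continuity_pt_comp h acos).
  - apply continuity_pt_filterlim.
    exact (ex_derive_continuous (K := R_AbsRing) (V := R_NormedModule) _ _ D).
  - now apply derivable_continuous_pt, derivable_pt_acos.
Qed.

Lemma exp_10_gt_243 : 243 < exp 10.
Proof.
  assert (H2 : 3 < exp 2) by (pose proof (exp_ineq1 2 ltac:(lra)); lra).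
  replace 10 with (2 + 2 + 2 + 2 + 2) by ring. rewrite !exp_plus.
  assert (9 < exp 2 * exp 2) by nra.
  assert (27 < exp 2 * exp 2 * exp 2) by nra.
  assert (81 < exp 2 * exp 2 * exp 2 * exp 2) by nra.
  nra.
Qed.

(** * Geodesics of Sol *)

Definition vscale (k : R) (u : pt) : pt := Pt (k * px u) (k * py u) (k * pz u).

(* First-order system of the geodesics lying in a plane x = const: in w = e^z that plane is the
   upper half-plane with metric (dy^2 + dw^2) / w^2, whose geodesics are the semicircles centred at
   w = 0, y = cc. *)
Definition circle_ode (c : curve) (k cc : R) : Prop :=
  forall t, is_derive (cx c) t 0 /\
            is_derive (cy c) t (k * exp (2 * cz c t)) /\
            is_derive (cz c) t (k * (cc - cy c t)).

Section CircleOde.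

Variables (c : curve) (k cc : R).
Hypothesis Hc : circle_ode c k cc.

Lemma velocity_circle_ode t :
  velocity c t = vscale k (Pt 0 (exp (2 * cz c t)) (cc - cy c t)).
Proof.
  destruct (Hc t) as [Dx [Dy Dz]].
  unfold velocity, vscale; simpl.
  rewrite (is_derive_unique _ _ _ Dx), (is_derive_unique _ _ _ Dy), (is_derive_unique _ _ _ Dz).
  f_equal; ring.
Qed.

Lemma is_geodesic_circle_ode : is_geodesic c.
Proof.
  assert (Dx : forall t, Derive (cx c) t = 0)
    by (intros t; apply is_derive_unique, Hc).
  assert (Dy : forall t, Derive (cy c) t = k * exp (2 * cz c t))
    by (intros t; apply is_derive_unique, Hc).
  assert (Dz : forall t, Derive (cz c) t = k * (cc - cy c t))
    by (intros t; apply is_derive_unique, Hc).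
  assert (Dxx : forall t, is_derive (Derive (cx c)) t 0).
  { intros t. apply (is_derive_ext (fun _ => 0)); [intros s; now rewrite Dx|].
    auto_derive; auto. }
  assert (Dyy : forall t,
    is_derive (Derive (cy c)) t (2 * k * exp (2 * cz c t) * (k * (cc - cy c t)))).
  { intros t. apply (is_derive_ext (fun s => k * exp (2 * cz c s))); [intros s; now rewrite Dy|].
    destruct (Hc t) as [_ [_ Hz]].
    auto_derive; [now exists (k * (cc - cy c t))|].
    change (fun x => cz c x) with (cz c). rewrite Dz. ring. }
  assert (Dzz : forall t, is_derive (Derive (cz c)) t (- k * (k * exp (2 * cz c t)))).
  { intros t. apply (is_derive_ext (fun s => k * (cc - cy c s))); [intros s; now rewrite Dz|].
    destruct (Hc t) as [_ [Hy _]].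
    auto_derive; [now exists (k * exp (2 * cz c t))|].
    change (fun x => cy c x) with (cy c). rewrite Dy. ring. }
  split; [|split]; intros t.
  - destruct (Hc t) as [Hx [Hy Hz]].
    repeat split; [exists 0 | exists (k * exp (2 * cz c t)) | exists (k * (cc - cy c t))]; assumption.
  - repeat split; eexists; [apply Dxx | apply Dyy | apply Dzz].
  - rewrite (is_derive_unique _ _ _ (Dxx t)), (is_derive_unique _ _ _ (Dyy t)),
      (is_derive_unique _ _ _ (Dzz t)), Dx, Dy, Dz.
    assert (E : exp (- (2 * cz c t)) * exp (2 * cz c t) = 1)
      by (rewrite <- exp_plus, Rplus_opp_l; apply exp_0).
    repeat split; [ring | ring |].
    transitivity (k * k * exp (2 * cz c t) * (exp (- (2 * cz c t)) * exp (2 * cz c t) - 1));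
      [ring | rewrite E; ring].
Qed.

End CircleOde.

(* y = cc + r tanh u and e^z = r / cosh u with u = a t + b. *)
Definition semicircle (x0 cc r a b : R) : curve :=
  Curve (fun _ => x0)
        (fun t => cc + r * ((exp (2 * (a * t + b)) - 1) / (exp (2 * (a * t + b)) + 1)))
        (fun t => ln (2 * r) + (a * t + b) - ln (exp (2 * (a * t + b)) + 1)).

Section Semicircle.

Variables (x0 cc r a b : R).
Hypothesis Hr : 0 < r.

Lemma exp_2_semicircle t :
  exp (2 * cz (semicircle x0 cc r a b) t) =
  4 * r ^ 2 * exp (2 * (a * t + b)) / (exp (2 * (a * t + b)) + 1) ^ 2.
Proof.
  simpl. set (u := a * t + b). assert (He := exp_pos (2 * u)).
  replace (2 * (ln (2 * r) + u - ln (exp (2 * u) + 1)))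
    with (ln (2 * r) + ln (2 * r) + 2 * u - (ln (exp (2 * u) + 1) + ln (exp (2 * u) + 1)))
    by ring.
  unfold Rminus. rewrite exp_plus, exp_Ropp, !exp_plus, !exp_ln by lra.
  field. lra.
Qed.

Lemma semicircle_circle_ode : circle_ode (semicircle x0 cc r a b) (a / r) cc.
Proof.
  intros t. rewrite exp_2_semicircle. simpl.
  assert (He := exp_pos (2 * (a * t + b))).
  split; [|split]; auto_derive; auto; try lra; field; lra.
Qed.

Lemma semicircle_point Y z t :
  r * r = Y * Y + exp z * exp z -> a * t + b = ln ((r + Y) / exp z) ->
  cpt (semicircle x0 cc r a b) t = Pt x0 (cc + Y) z.
Proof.
  intros Hcirc Ht. assert (Hw := exp_pos z).
  assert (HY : 0 < r + Y) by nra.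
  assert (Hq : 0 < (r + Y) / exp z) by (apply Rdiv_lt_0_compat; lra).
  assert (Eq : exp (2 * (a * t + b)) = (r + Y) / exp z * ((r + Y) / exp z))
    by (rewrite Ht, exp_2x, exp_ln; auto).
  assert (Q1 : (r + Y) / exp z * ((r + Y) / exp z) + 1 = 2 * r * (r + Y) / (exp z * exp z))
    by (field_simplify_eq; [nra | lra]).
  assert (Q2 : (r + Y) / exp z * ((r + Y) / exp z) - 1 = 2 * Y * (r + Y) / (exp z * exp z))
    by (field_simplify_eq; [nra | lra]).
  unfold cpt; simpl. rewrite Eq, Q1, Q2, Ht. f_equal.
  - field. split; lra.
  - rewrite <- ln_mult, <- ln_div by (try apply Rdiv_lt_0_compat; nra).
    replace (2 * r * ((r + Y) / exp z) / (2 * r * (r + Y) / (exp z * exp z))) with (exp z)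
      by (field; split; lra).
    apply ln_exp.
Qed.

End Semicircle.

Lemma semicircle_param_lt r Y0 Y1 z0 z1 : 0 < r ->
  r * r = Y0 * Y0 + exp z0 * exp z0 -> r * r = Y1 * Y1 + exp z1 * exp z1 -> Y1 < Y0 ->
  ln ((r + Y1) / exp z1) < ln ((r + Y0) / exp z0).
Proof.
  intros Hr H0 H1 HY. assert (Hw0 := exp_pos z0). assert (Hw1 := exp_pos z1).
  assert (Hq0 : 0 < (r + Y0) / exp z0) by (apply Rdiv_lt_0_compat; nra).
  assert (Hq1 : 0 < (r + Y1) / exp z1) by (apply Rdiv_lt_0_compat; nra).
  assert (Sq : forall Y z, r * r = Y * Y + exp z * exp z ->
            (r + Y) / exp z * ((r + Y) / exp z) = -1 + 2 * r / (r - Y)).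
  { intros Y z H. assert (0 < exp z) by apply exp_pos. assert (0 < r - Y) by nra.
    field_simplify_eq; [nra | lra]. }
  assert (0 < r - Y0) by nra.
  assert (2 * r / (r - Y1) < 2 * r / (r - Y0)).
  { unfold Rdiv. apply Rmult_lt_compat_l; [lra|]. apply Rinv_lt_contravar; nra. }
  apply ln_increasing; [assumption|].
  pose proof (Sq _ _ H0). pose proof (Sq _ _ H1). nra.
Qed.

(* The Euclidean centre, on the line w = 0, of the circle through (y0, e^z0) and (y1, e^z1). *)
Definition circle_center (y0 z0 y1 z1 : R) : R :=
  (y1 * y1 + exp (2 * z1) - y0 * y0 - exp (2 * z0)) / (2 * (y1 - y0)).

Lemma vertical_segment x0 y0 z0 y1 z1 : y1 < y0 ->
  exists c k, k < 0 /\ geod_segment c (Pt x0 y0 z0) (Pt x0 y1 z1) /\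
              circle_ode c k (circle_center y0 z0 y1 z1).
Proof.
  intros Hy. set (cc := circle_center y0 z0 y1 z1).
  set (Y0 := y0 - cc). set (Y1 := y1 - cc).
  set (r := sqrt (Y0 * Y0 + exp z0 * exp z0)).
  assert (Hw0 := exp_pos z0).
  assert (Hr : 0 < r) by (apply sqrt_lt_R0; nra).
  assert (Hr0 : r * r = Y0 * Y0 + exp z0 * exp z0) by (apply sqrt_sqrt; nra).
  assert (Hr1 : r * r = Y1 * Y1 + exp z1 * exp z1).
  { rewrite Hr0. unfold Y0, Y1, cc, circle_center. rewrite !exp_2x. field. lra. }
  set (s0 := ln ((r + Y0) / exp z0)). set (s1 := ln ((r + Y1) / exp z1)).
  assert (Hs : s1 < s0) by (apply semicircle_param_lt; unfold Y0, Y1; lra || assumption).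
  exists (semicircle x0 cc r (s1 - s0) s0), ((s1 - s0) / r).
  split; [apply Rdiv_neg_pos; lra|]. split; [split; [|split]|].
  - apply is_geodesic_circle_ode with (k := (s1 - s0) / r) (cc := cc).
    now apply semicircle_circle_ode.
  - replace y0 with (cc + Y0) by (unfold Y0; ring).
    apply semicircle_point; [assumption | assumption | unfold s0; ring].
  - replace y1 with (cc + Y1) by (unfold Y1; ring).
    apply semicircle_point; [assumption | assumption | unfold s1; ring].
  - now apply semicircle_circle_ode.
Qed.

(* The isometry (x, y, z) |-> (y, x, -z) of Sol. *)
Definition swap_pt (p : pt) : pt := Pt (py p) (px p) (- pz p).
Definition swap_curve (c : curve) : curve := Curve (cy c) (cx c) (fun t => - cz c t).

Lemma velocity_swap c t : velocity (swap_curve c) t = swap_pt (velocity c t).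
Proof. unfold velocity, swap_pt; simpl. now rewrite Derive_opp. Qed.

Lemma is_geodesic_swap c : is_geodesic c -> is_geodesic (swap_curve c).
Proof.
  intros [D1 [D2 Eq]]. unfold is_geodesic; simpl.
  assert (Dopp : forall t, Derive (fun s => - cz c s) t = - Derive (cz c) t)
    by (intros; apply Derive_opp).
  split; [|split]; intros t.
  - destruct (D1 t) as [Dx [Dy Dz]]. repeat split; auto.
    now apply (ex_derive_opp (V := R_NormedModule)).
  - destruct (D2 t) as [Dx [Dy Dz]]. repeat split; auto.
    apply (ex_derive_ext (fun s => - Derive (cz c) s)); [intros; now rewrite Dopp|].
    now apply (ex_derive_opp (V := R_NormedModule)).
  - destruct (Eq t) as [E1 [E2 E3]].
    rewrite (Derive_ext (Derive (fun s => - cz c s)) _ t Dopp), !Derive_opp.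
    replace (2 * - cz c t) with (- (2 * cz c t)) by ring.
    rewrite Ropp_involutive. repeat split; lra.
Qed.

Lemma geod_segment_swap c P Q :
  geod_segment c P Q -> geod_segment (swap_curve c) (swap_pt P) (swap_pt Q).
Proof.
  intros [G [HP HQ]]. split; [now apply is_geodesic_swap|].
  now rewrite <- HP, <- HQ.
Qed.

(* Conservation law coming from the invariance of the metric under x-translations. *)
Lemma is_derive_x_momentum c t : is_geodesic c ->
  is_derive (fun s => Derive (cx c) s * exp (2 * cz c s)) t 0.
Proof.
  intros [D1 [D2 Eq]]. destruct (D1 t) as [_ [_ Dz]]. destruct (D2 t) as [Dx _].
  destruct (Eq t) as [E _].
  auto_derive; [now split|].
  change (fun x => Derive (cx c) x) with (Derive (cx c)).
  change (fun x => cz c x) with (cz c).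
  replace (Derive (Derive (cx c)) t) with (- 2 * Derive (cx c) t * Derive (cz c) t) by lra.
  ring.
Qed.

Lemma geodesic_x_const_or_injective c : is_geodesic c ->
  (forall a b, cx c a = cx c b) \/ (forall a b, a <> b -> cx c a <> cx c b).
Proof.
  intros G.
  set (m := fun t => Derive (cx c) t * exp (2 * cz c t)).
  assert (Hm : forall t, m t = m 0).
  { intros t. destruct (mean_value m (fun _ => 0) (fun s => is_derive_x_momentum c s G) 0 t)
      as [e He].
    lra. }
  assert (Dx : forall t, is_derive (cx c) t (Derive (cx c) t))
    by (intros t; apply Derive_correct, G).
  assert (Hx' : forall t, Derive (cx c) t = 0 <-> m 0 = 0).
  { intros t. rewrite <- (Hm t). unfold m. assert (0 < exp (2 * cz c t)) by apply exp_pos.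
    split; intros Hz; [rewrite Hz; ring | destruct (Rmult_integral _ _ Hz); lra]. }
  destruct (Req_dec (m 0) 0) as [Z | NZ]; [left | right].
  - intros a b. destruct (mean_value _ _ Dx a b) as [e He].
    rewrite (proj2 (Hx' e) Z) in He. lra.
  - intros a b Hab Heq. destruct (mean_value _ _ Dx a b) as [e He].
    apply NZ, (Hx' e). rewrite Heq, Rminus_diag in He.
    destruct (Rmult_integral _ _ (eq_sym He)); [assumption | lra].
Qed.

Lemma not_on_common_geodesic A B C :
  px A = px C -> px B <> px A -> A <> C -> ~ on_common_geodesic A B C.
Proof.
  intros HAC HB HneAC [c [G [_ [a [b [d [Ha [Hb Hd]]]]]]]].
  subst A B C. unfold cpt in *; simpl in *.
  destruct (geodesic_x_const_or_injective c G) as [K | K].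
  - now apply HB.
  - destruct (Req_dec a d) as [-> | Nad]; [now apply HneAC | now apply (K a d Nad)].
Qed.

Lemma sol_angle_vscale p m n u v : 0 < m -> 0 < n ->
  sol_angle p (vscale m u) (vscale n v) = sol_angle p u v.
Proof.
  intros Hm Hn. unfold sol_angle, sol_metric, vscale; simpl. f_equal.
  set (e1 := exp (2 * pz p)). set (e2 := exp (- (2 * pz p))).
  set (M := e1 * px u * px v + e2 * py u * py v + pz u * pz v).
  set (X := (e1 * px u * px u + e2 * py u * py u + pz u * pz u) *
            (e1 * px v * px v + e2 * py v * py v + pz v * pz v)).
  replace (e1 * (m * px u) * (n * px v) + e2 * (m * py u) * (n * py v) + m * pz u * (n * pz v))
    with ((m * n) * M) by (unfold M; ring).
  match goal with |- _ / sqrt ?Y = _ => replace Y with ((m * n) * (m * n) * X) by (unfold X; ring) end.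
  rewrite sqrt_mult_alt, sqrt_square by nra.
  unfold Rdiv. rewrite Rinv_mult.
  transitivity (m * n * / (m * n) * (M * / sqrt X)); [ring|].
  rewrite Rinv_r by nra. ring.
Qed.

Definition diagonal : curve := Curve (fun t => 2 * t) (fun t => 2 * t) (fun _ => 0).

Lemma Derive_diagonal_xy t : Derive (fun s => 2 * s) t = 2.
Proof. apply is_derive_unique. auto_derive; auto; ring. Qed.

Lemma Derive_diagonal_z t : Derive (fun _ => 0) t = 0.
Proof. apply is_derive_unique. auto_derive; auto. Qed.

Lemma velocity_diagonal t : velocity diagonal t = Pt 2 2 0.
Proof. unfold velocity; simpl. now rewrite Derive_diagonal_xy, Derive_diagonal_z. Qed.

Lemma is_geodesic_diagonal : is_geodesic diagonal.
Proof.
  assert (D2 : forall t, is_derive (Derive (fun s => 2 * s)) t 0).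
  { intros t. apply (is_derive_ext (fun _ => 2)); [intros s; now rewrite Derive_diagonal_xy|].
    auto_derive; auto. }
  assert (D0 : forall t, is_derive (Derive (fun _ => 0)) t 0).
  { intros t. apply (is_derive_ext (fun _ => 0)); [intros s; now rewrite Derive_diagonal_z|].
    auto_derive; auto. }
  split; [|split]; intros t; simpl.
  - repeat split; auto_derive; auto.
  - repeat split; eexists; [apply D2 | apply D2 | apply D0].
  - rewrite (is_derive_unique _ _ _ (D2 t)), (is_derive_unique _ _ _ (D0 t)),
      Derive_diagonal_xy, Derive_diagonal_z.
    replace (- (2 * 0)) with (2 * 0) by ring. repeat split; ring.
Qed.

(** * A family of triangles *)

Definition center_CA (e : R) : R := (3 + e) / 4.
Definition center_BC (e : R) : R := (5 - / e) / 4.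

Lemma circle_center_CA s : circle_center 2 s 0 0 = center_CA (exp (2 * s)).
Proof. unfold circle_center, center_CA. rewrite (Rmult_0_r 2), exp_0. field. Qed.

Lemma circle_center_BC s : circle_center 2 0 0 (- s) = center_BC (exp (2 * s)).
Proof.
  unfold circle_center, center_BC. rewrite (Rmult_0_r 2), exp_0.
  replace (2 * - s) with (- (2 * s)) by ring. rewrite exp_Ropp.
  field. apply Rgt_not_eq, exp_pos.
Qed.

Definition cos_A (e : R) : R := 1 / sqrt (2 * (1 + center_CA e * center_CA e)).
Definition cos_B (e : R) : R := 1 / sqrt (2 * (1 + (center_BC e - 2) * (center_BC e - 2))).
Definition cos_C (e : R) : R :=
  (center_CA e - 2) * center_BC e /
  sqrt ((e + (center_CA e - 2) * (center_CA e - 2)) * (/ e + center_BC e * center_BC e)).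

(* Angle sum of the triangle (0,0,0), (2,2,0), (0,2,s) as a function of e = exp (2 s). *)
Definition angle_sum_profile (e : R) : R := acos (cos_A e) + acos (cos_B e) + acos (cos_C e).

Lemma sol_angle_at_A c :
  sol_angle (Pt 0 0 0) (Pt 1 1 0) (Pt 0 1 c) = acos (1 / sqrt (2 * (1 + c * c))).
Proof.
  unfold sol_angle, sol_metric; simpl.
  rewrite (Rmult_0_r 2), Ropp_0, exp_0.
  f_equal. f_equal; [ring | f_equal; ring].
Qed.

Lemma sol_angle_at_B c :
  sol_angle (Pt 2 2 0) (Pt (-1) 0 (c - 2)) (Pt (-1) (-1) 0) =
  acos (1 / sqrt (2 * (1 + (c - 2) * (c - 2)))).
Proof.
  unfold sol_angle, sol_metric; simpl.
  rewrite (Rmult_0_r 2), Ropp_0, exp_0.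
  f_equal. f_equal; [ring | f_equal; ring].
Qed.

Lemma sol_angle_at_C s a b :
  sol_angle (Pt 0 2 s) (Pt 0 (- exp (2 * s)) (2 - a)) (Pt (/ exp (2 * s)) 0 (- b)) =
  acos ((a - 2) * b / sqrt ((exp (2 * s) + (a - 2) * (a - 2)) * (/ exp (2 * s) + b * b))).
Proof.
  unfold sol_angle, sol_metric; simpl. rewrite exp_Ropp.
  assert (He := exp_pos (2 * s)).
  f_equal. f_equal; [field | f_equal; f_equal; field]; lra.
Qed.

Section Family.

Variables (s k l : R) (cCA c : curve).
Hypotheses (Hk : k < 0) (Hl : l < 0).
Hypothesis SCA : geod_segment cCA (Pt 0 2 s) (Pt 0 0 0).
Hypothesis OCA : circle_ode cCA k (center_CA (exp (2 * s))).
(* The side BC is [swap_curve c], with c running in the plane x = 2. *)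
Hypothesis Sc : geod_segment c (Pt 2 2 0) (Pt 2 0 (- s)).
Hypothesis Oc : circle_ode c l (center_BC (exp (2 * s))).

Lemma family_geod_triangle :
  geod_triangle (Pt 0 0 0) (Pt 2 2 0) (Pt 0 2 s) diagonal (swap_curve c) cCA.
Proof.
  split; [|split; [|split]].
  - apply not_on_common_geodesic; simpl; try lra.
    intros E. injection E. lra.
  - split; [apply is_geodesic_diagonal|].
    unfold cpt; simpl. split; f_equal; ring.
  - pose proof (geod_segment_swap _ _ _ Sc) as SBC. unfold swap_pt in SBC; simpl in SBC.
    now rewrite Ropp_0, Ropp_involutive in SBC.
  - exact SCA.
Qed.

Lemma family_angle_sum :
  angle_sum (Pt 0 0 0) (Pt 2 2 0) (Pt 0 2 s) diagonal (swap_curve c) cCA =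
  angle_sum_profile (exp (2 * s)).
Proof.
  destruct SCA as [_ [CA0 CA1]]. injection CA0 as _ yCA0 zCA0. injection CA1 as _ yCA1 zCA1.
  destruct Sc as [_ [C0 C1]]. injection C0 as _ y0 z0. injection C1 as _ y1 z1.
  unfold angle_sum, angle_sum_profile.
  rewrite !velocity_diagonal, !velocity_swap, !(velocity_circle_ode _ _ _ OCA),
    !(velocity_circle_ode _ _ _ Oc), yCA0, zCA0, yCA1, zCA1, y0, z0, y1, z1.
  rewrite (Rmult_0_r 2), exp_0.
  f_equal; [f_equal|].
  - unfold cos_A. rewrite <- sol_angle_at_A, <- (sol_angle_vscale _ 2 (- k) (Pt 1 1 0)) by lra.
    unfold vscale, opp_vec; simpl. f_equal; f_equal; ring.
  - unfold cos_B. rewrite <- sol_angle_at_B, <- (sol_angle_vscale _ (- l) 2 (Pt (-1) 0 _)) by lra.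
    unfold vscale, opp_vec, swap_pt; simpl. f_equal; f_equal; ring.
  - unfold cos_C. rewrite <- sol_angle_at_C, <- (sol_angle_vscale _ (- k) (- l) (Pt 0 _ _)) by lra.
    unfold vscale, opp_vec, swap_pt; simpl.
    replace (2 * - s) with (- (2 * s)) by ring. rewrite exp_Ropp.
    f_equal; f_equal; ring.
Qed.

End Family.

Lemma triangle_family s : exists cAB cBC cCA,
  geod_triangle (Pt 0 0 0) (Pt 2 2 0) (Pt 0 2 s) cAB cBC cCA /\
  angle_sum (Pt 0 0 0) (Pt 2 2 0) (Pt 0 2 s) cAB cBC cCA = angle_sum_profile (exp (2 * s)).
Proof.
  destruct (vertical_segment 0 2 s 0 0 ltac:(lra)) as [cCA [k [Hk [SCA OCA]]]].
  destruct (vertical_segment 2 2 0 0 (- s) ltac:(lra)) as [c [l [Hl [Sc Oc]]]].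
  rewrite circle_center_CA in OCA. rewrite circle_center_BC in Oc.
  exists diagonal, (swap_curve c), cCA.
  split; [apply family_geod_triangle | apply (family_angle_sum _ k l)]; assumption.
Qed.

Lemma cos_A_bound e : -1 < cos_A e < 1.
Proof. apply div_sqrt_bound. set (c := center_CA e). nra. Qed.

Lemma cos_B_bound e : -1 < cos_B e < 1.
Proof. apply div_sqrt_bound. set (c := center_BC e - 2). nra. Qed.

Lemma cos_C_bound e : 0 < e -> -1 < cos_C e < 1.
Proof.
  intros He. apply div_sqrt_bound.
  set (P := center_CA e - 2). set (Q := center_BC e).
  assert (0 < / e) by (apply Rinv_0_lt_compat; assumption).
  replace ((e + P * P) * (/ e + Q * Q)) with (1 + e * (Q * Q) + P * P * / e + P * Q * (P * Q))
    by (field; lra).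
  assert (0 <= e * (Q * Q)) by nra. assert (0 <= P * P * / e) by nra.
  lra.
Qed.

Lemma angle_sum_profile_continuous e : 0 < e -> continuity_pt angle_sum_profile e.
Proof.
  intros He. assert (0 < / e) by (apply Rinv_0_lt_compat; assumption).
  unfold angle_sum_profile.
  apply continuity_pt_plus; [apply continuity_pt_plus|]; apply continuity_pt_acos_comp;
    auto using cos_A_bound, cos_B_bound, cos_C_bound.
  all: unfold cos_A, cos_B, cos_C, center_CA, center_BC; auto_derive.
  all: repeat split; try apply Rgt_not_eq, sqrt_lt_R0; try lra.
  all: apply Rmult_lt_0_compat; nra.
Qed.

Lemma angle_sum_profile_1 : angle_sum_profile 1 = 4 * PI / 3.
Proof.
  unfold angle_sum_profile, cos_A, cos_B, cos_C, center_CA, center_BC.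
  rewrite Rinv_1.
  replace ((3 + 1) / 4) with 1 by field. replace ((5 - 1) / 4) with 1 by field.
  replace (2 * (1 + 1 * 1)) with (2 * 2) by ring.
  replace (2 * (1 + (1 - 2) * (1 - 2))) with (2 * 2) by ring.
  replace ((1 + (1 - 2) * (1 - 2)) * (1 + 1 * 1)) with (2 * 2) by ring.
  rewrite sqrt_square by lra.
  replace ((1 - 2) * 1 / 2) with (- (1 / 2)) by field.
  rewrite acos_opp, acos_half. field.
Qed.

(* As e grows the angles at A, B and C tend to PI / 2, acos (2 sqrt 2 / 5) < PI / 3 and 0. *)
Lemma angle_sum_profile_lt_PI e : 243 < e -> angle_sum_profile e < PI.
Proof.
  intros He. set (f := / e).
  assert (Hf0 : 0 < f) by (apply Rinv_0_lt_compat; lra).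
  assert (Hf1 : f < 1 / 243) by (unfold f, Rdiv; rewrite Rmult_1_l; apply Rinv_lt_contravar; lra).
  assert (Hef : e * f = 1) by (unfold f; field; lra).
  assert (A : acos (cos_A e) < PI / 2).
  { rewrite <- acos_0. apply acos_decreasing; [lra | | apply Rlt_le, cos_A_bound].
    apply Rdiv_lt_0_compat; [lra | apply sqrt_lt_R0; set (c := center_CA e); nra]. }
  assert (B : acos (cos_B e) < PI / 3).
  { rewrite <- acos_half. apply acos_decreasing; [lra | | apply Rlt_le, cos_B_bound].
    unfold cos_B, center_BC. fold f. apply lt_div_sqrt; [lra | lra | nra | nra]. }
  assert (C : acos (cos_C e) < PI / 6).
  { rewrite <- acos_sqrt3_half. apply acos_decreasing; [ | | apply Rlt_le, cos_C_bound; lra].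
    - pose proof (sqrt_pos 3). lra.
    - unfold cos_C, center_CA, center_BC. fold f.
      set (P := (3 + e) / 4 - 2). set (Q := (5 - f) / 4).
      assert (HP : P = (e - 5) / 4) by (unfold P; field).
      assert (HQ : 1.2 <= Q <= 1.25) by (unfold Q; lra).
      assert (S3 : sqrt 3 / 2 * (sqrt 3 / 2) = 3 / 4)
        by (rewrite <- (sqrt_sqrt 3) at 3 by lra; field).
      apply lt_div_sqrt; [pose proof (sqrt_pos 3); lra | nra | apply Rmult_lt_0_compat; nra |].
      rewrite S3.
      assert (HP2 : 1.05 * (P * P) > 4.71 * e) by (rewrite HP; nra).
      assert (Hfq : f + Q * Q <= 1.567) by nra.
      assert (X1 : (e + P * P) * (f + Q * Q) <= (e + P * P) * 1.567)
        by (apply Rmult_le_compat_l; nra).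
      assert (X2 : 1.44 * (P * P) <= Q * Q * (P * P)) by (apply Rmult_le_compat_r; nra).
      nra. }
  unfold angle_sum_profile. lra.
Qed.

Lemma angle_sum_profile_eq_PI : exists e, 0 < e /\ angle_sum_profile e = PI.
Proof.
  pose proof exp_10_gt_243. pose proof PI_RGT_0.
  destruct (IVT_interv (fun e => PI - angle_sum_profile e) 1 (exp 10)) as [e [He Hroot]].
  - intros e He. apply continuity_pt_minus; [apply continuity_pt_const; now intros ? ? |].
    apply angle_sum_profile_continuous. lra.
  - lra.
  - rewrite angle_sum_profile_1. lra.
  - pose proof (angle_sum_profile_lt_PI (exp 10)). lra.
  - exists e. split; lra.
Qed.

Theorem theorem3p5 :
  (exists (A B C : pt) (cAB cBC cCA : curve),
     geod_triangle A B C cAB cBC cCA /\ angle_sum A B C cAB cBC cCA > PI) /\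
  (exists (A B C : pt) (cAB cBC cCA : curve),
     geod_triangle A B C cAB cBC cCA /\ angle_sum A B C cAB cBC cCA < PI) /\
  (exists (A B C : pt) (cAB cBC cCA : curve),
     geod_triangle A B C cAB cBC cCA /\ angle_sum A B C cAB cBC cCA = PI).
Proof.
  pose proof PI_RGT_0.
  split; [|split].
  - destruct (triangle_family 0) as [cAB [cBC [cCA [T E]]]].
    exists (Pt 0 0 0), (Pt 2 2 0), (Pt 0 2 0), cAB, cBC, cCA. split; [assumption|].
    rewrite E, Rmult_0_r, exp_0, angle_sum_profile_1. lra.
  - destruct (triangle_family 5) as [cAB [cBC [cCA [T E]]]].
    exists (Pt 0 0 0), (Pt 2 2 0), (Pt 0 2 5), cAB, cBC, cCA. split; [assumption|].
    rewrite E. apply angle_sum_profile_lt_PI. replace (2 * 5) with 10 by ring. apply exp_10_gt_243.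
  - destruct angle_sum_profile_eq_PI as [e [He Hsum]].
    destruct (triangle_family (ln e / 2)) as [cAB [cBC [cCA [T E]]]].
    exists (Pt 0 0 0), (Pt 2 2 0), (Pt 0 2 (ln e / 2)), cAB, cBC, cCA. split; [assumption|].
    rewrite E. replace (2 * (ln e / 2)) with (ln e) by field. now rewrite exp_ln.
Qed.
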